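(* For all positive integers $m,n$, $\Lambda(m,n)=\left([0,1)^{m\times n}\times[0,1)^m\right)\setminus\mathbf{Bad}(m,n)$.
   Context: $[0,1)^{m\times n}$ is the set of real $m\times n$ matrices with entries in $[0,1)$. For $\boldsymbol{x}\in\mathbb{R}^n$, $\|\boldsymbol{x}\|=\max_i|x_i|$; for $\boldsymbol{y}\in\mathbb{R}^m$, $\langle\boldsymbol{y}\rangle=\min_{\boldsymbol{p}\in\mathbb{Z}^m}\|\boldsymbol{y}-\boldsymbol{p}\|$. For $\psi:\mathbb{N}\to[0,\infty)$, $W_{m,n}(\psi)$ is the set of pairs $(A,\boldsymbol{\gamma})\in[0,1)^{m\times n}\times[0,1)^m$ such that $\langle A\boldsymbol{q}-\boldsymbol{\gamma}\rangle<\psi(\|\boldsymbol{q}\|)$ for infinitely many $\boldsymbol{q}\in\mathbb{Z}^n$. ''Decreasing'' means non-increasing. $\mathcal{C}$ is the set of decreasing $\psi:\mathbb{N}\to[0,\infty)$ with $\sum_{q\ge1}q^{n-1}\psi(q)^m<\infty$. $\Lambda(m,n)=\bigcup_{\psi\in\mathcal{C}}W_{m,n}(\psi)$. $\mathbf{Bad}(m,n)=\{(A,\boldsymbol{\gamma})\in[0,1)^{m\times n}\times[0,1)^m:\liminf_{\boldsymbol{q}\in\mathbb{Z}^n,\|\boldsymbol{q}\|\to\infty}\|\boldsymbol{q}\|^n\langle A\boldsymbol{q}-\boldsymbol{\gamma}\rangle^m>0\}$. *)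

From HB Require Import structures.
From mathcomp Require Import all_boot all_order all_algebra.
From mathcomp Require Import all_classical all_reals all_analysis.
Unset Printing Implicit Defensive.
Import Order.TTheory GRing.Theory Num.Theory.
Import numFieldNormedType.Exports.
Local Open Scope classical_set_scope.
Local Open Scope ring_scope.

Section Defs.
Variable R : realType.

Definition supn_int (n : nat) (q : 'cV[int]_n) : nat := \max_(i < n) `|q i ord0|%N.

Definition supn_real (m : nat) (x : 'cV[R]_m) : R := \big[Num.max/0]_(i < m) `|x i ord0|.

(* <y> = min_{p in Z^m} ||y - p||  (the minimum is attained, so it is this infimum) *)
Definition dist_intv (m : nat) (y : 'cV[R]_m) : R :=
  inf [set r : R | exists p : 'cV[int]_m, r = supn_real m (y - map_mx (fun z : int => z%:~R) p)].

Definition box (m n : nat) : set ('M[R]_(m, n) * 'cV[R]_m) :=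
  [set Ag : 'M[R]_(m, n) * 'cV[R]_m | (forall i j, 0 <= Ag.1 i j < 1) /\ (forall i, 0 <= Ag.2 i ord0 < 1)].

Definition affine_form (m n : nat) (A : 'M[R]_(m, n)) (g : 'cV[R]_m) (q : 'cV[int]_n)
  : 'cV[R]_m := A *m map_mx (fun z : int => z%:~R) q - g.

Definition W (m n : nat) (psi : nat -> R) : set ('M[R]_(m, n) * 'cV[R]_m) :=
  [set Ag : 'M[R]_(m, n) * 'cV[R]_m | box m n Ag /\
     ~ finite_set [set q : 'cV[int]_n |
          dist_intv m (affine_form m n Ag.1 Ag.2 q) < psi (supn_int n q)]].

Definition classC (m n : nat) (psi : nat -> R) : Prop :=
  (forall k, (0 < k)%N -> 0 <= psi k) /\
  (forall a b, (0 < a)%N -> (a <= b)%N -> psi b <= psi a) /\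
  cvgn (series (fun k : nat => (k.+1)%:R ^+ n.-1 * psi k.+1 ^+ m)).

Definition Lambda (m n : nat) : set ('M[R]_(m, n) * 'cV[R]_m) :=
  [set Ag : 'M[R]_(m, n) * 'cV[R]_m | exists psi : nat -> R, classC m n psi /\ W m n psi Ag].

(* Bad(m,n): liminf_{||q|| -> oo} ||q||^n <Aq - gamma>^m > 0, i.e. there are
   c > 0 and N such that ||q||^n <Aq - gamma>^m >= c whenever ||q|| >= N *)
Definition Bad (m n : nat) : set ('M[R]_(m, n) * 'cV[R]_m) :=
  [set Ag : 'M[R]_(m, n) * 'cV[R]_m | box m n Ag /\
     exists c : R, 0 < c /\ exists N : nat, forall q : 'cV[int]_n, (N <= supn_int n q)%N ->
        c <= (supn_int n q)%:R ^+ n * dist_intv m (affine_form m n Ag.1 Ag.2 q) ^+ m].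

End Defs.

From HB Require Import structures.
From mathcomp Require Import all_boot all_order all_algebra.
From mathcomp Require Import all_classical all_reals all_analysis.
From mathcomp Require Import zify.
Import Order.TTheory GRing.Theory Num.Theory.
Import numFieldNormedType.Exports.
Local Open Scope classical_set_scope.
Local Open Scope ring_scope.

(* If psi is in C, then since psi is nonincreasing the block of the series
   between K/2 and K is at least 3^-n K^n psi(K)^m, so K^n psi(K)^m -> 0; the
   infinitely many q with <Aq - gamma> < psi(||q||) then have arbitrarily large
   ||q|| and ||q||^n <Aq - gamma>^m -> 0, which is incompatible with Bad.
   Conversely, outside Bad there are q_k with Q_k = ||q_k|| strictly increasing
   and Q_k^n <Aq_k - gamma>^m < 2^-k.  The step function psi equal to
   (2^-k / Q_k^n)^(1/m) on (Q_(k-1), Q_k] is nonincreasing, exceeds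
   <Aq_k - gamma> at Q_k, and sum_t t^(n-1) psi(t)^m <= sum_k Q_k^n 2^-k / Q_k^n
   = sum_k 2^-k < oo. *)

Lemma supn_real_ge0 (R : realType) m (x : 'cV[R]_m) : 0 <= supn_real R m x.
Proof. by rewrite /supn_real; elim/big_ind: _ => //= a b a0 b0; rewrite le_max a0. Qed.

Lemma dist_intv_ge0 {R : realType} {m : nat} (y : 'cV[R]_m) : 0 <= dist_intv R m y.
Proof.
apply: lb_le_inf; first by exists (supn_real R m (y - map_mx intr 0)), 0.
by move=> _ [p ->]; exact: supn_real_ge0.
Qed.

Lemma finite_supn_int_le n N : finite_set [set q : 'cV[int]_n | (supn_int n q <= N)%N].
Proof.
pose shift (g : {ffun 'I_n -> 'I_(N.*2.+1)}) : 'cV[int]_n := \col_i ((g i)%:Z - N%:Z).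
apply: (sub_finite_set _ (finite_image shift (@finite_finset _ setT))) => q /= qN.
have qiN i : (`|q i ord0| <= N)%N.
  by apply: leq_trans qN; exact: (@leq_bigmax _ (fun i => `|q i ord0|%N) i).
exists [ffun i => inord (absz (q i ord0 + N%:Z))] => //.
apply/matrixP => i j; rewrite !mxE ffunE (ord1 j) inordK; last by have := qiN i; lia.
by have := qiN i; case: (q i ord0) => k /= kN; lia.
Qed.

Lemma infinite_supn_int_unbounded {n : nat} {S : set 'cV[int]_n} :
  ~ finite_set S -> forall N, exists2 q, S q & (N < supn_int n q)%N.
Proof.
move=> Sinf N; apply: contrapT => noq; apply: Sinf.
apply: sub_finite_set (finite_supn_int_le n N) => q Sq /=.
by rewrite leqNgt; apply/negP => Nq; apply: noq; exists q.
Qed.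

Lemma series_tail_le_lim (R : realFieldType) (u : R ^nat) k K :
  (forall j, 0 <= u j) -> cvgn (series u) -> (k <= K)%N ->
  \sum_(k <= j < K) u j <= limn (series u) - series u k.
Proof.
move=> u_ge0 u_cvg kK; rewrite -sub_series_geq // lerB //.
by apply: (nondecreasing_cvgn_le _ u_cvg); exact: nondecreasing_series.
Qed.

Section weighted_olivier.
Context {R : realFieldType} {n : nat} {f : nat -> R}.
Hypotheses (n_gt0 : (0 < n)%N) (f_ge0 : forall k, (0 < k)%N -> 0 <= f k)
  (f_nonincr : forall a b, (0 < a)%N -> (a <= b)%N -> f b <= f a).

Let u k := (k.+1)%:R ^+ n.-1 * f k.+1.

Let u_ge0 k : 0 <= u k.
Proof. by rewrite mulr_ge0 ?exprn_ge0 ?f_ge0. Qed.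

Lemma weighted_block_bound K : (2 <= K)%N ->
  K%:R ^+ n * f K <= 3 ^+ n * \sum_(K./2 <= j < K) u j.
Proof.
move=> K_ge2; set k := K./2.
have k_gt0 : (0 < k)%N by rewrite /k; lia.
have fK_ge0 : 0 <= f K by rewrite f_ge0 //; lia.
(* K - k >= K / 3 terms, each >= k ^+ n.-1 * f K >= (K / 3) ^+ n.-1 * f K *)
have -> : K%:R ^+ n * f K = 3 ^+ n * ((K%:R / 3) ^+ n * f K).
  by rewrite expr_div_n mulrA mulrCA divff ?mulr1 // expf_neq0.
rewrite ler_wpM2l ?exprn_ge0 //.
apply: (@le_trans _ _ (\sum_(k <= j < K) k%:R ^+ n.-1 * f K)); last first.
  apply: ler_sum_nat => j /andP[kj jK]; rewrite /u.
  apply: ler_pM; rewrite ?exprn_ge0 ?f_ge0 //; first lia.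
    by apply: lerXn2r; rewrite ?nnegrE ?ler_nat //; lia.
  by apply: f_nonincr.
rewrite sumr_const_nat -[_ *+ (K - k)]mulr_natr -{1}(prednK n_gt0) exprSr mulrAC.
apply: ler_pM; rewrite ?mulr_ge0 ?exprn_ge0 ?divr_ge0 //.
  rewrite ler_wpM2r //; apply: lerXn2r; rewrite ?nnegrE ?divr_ge0 //.
  by rewrite ler_pdivrMr // -natrM ler_nat; lia.
by rewrite ler_pdivrMr // -natrM ler_nat; lia.
Qed.

Lemma weighted_olivier : cvgn (series u) -> (fun K => K%:R ^+ n * f K) @ \oo --> 0.
Proof.
move=> u_cvg; apply/cvgrPdist_lt => e e_gt0.
have tail_cvg0 : (fun k => limn (series u) - series u k) @ \oo --> 0.
  by rewrite -(subrr (limn (series u))); apply: cvgB => //; exact: cvg_cst.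
have e3_gt0 : 0 < e / 3 ^+ n by rewrite divr_gt0 ?exprn_gt0.
have [M _ tailM] := cvgr_lt _ tail_cvg0 _ e3_gt0.
exists M.*2.+2 => // K /= MK.
have fK_ge0 : 0 <= f K by rewrite f_ge0 //; lia.
rewrite sub0r normrN ger0_norm ?mulr_ge0 ?exprn_ge0 //.
apply: le_lt_trans (weighted_block_bound _ _) _; first lia.
rewrite mulrC -ltr_pdivlMr ?exprn_gt0 //.
apply: le_lt_trans (tailM K./2 _); first by apply: series_tail_le_lim => //; lia.
by rewrite /=; lia.
Qed.

End weighted_olivier.

Lemma Lambda_sub_notBad (R : realType) m n : (0 < n)%N ->
  Lambda R m n `<=` box R m n `\` Bad R m n.
Proof.
move=> n_gt0 [A g] [psi [[psi_ge0 [psi_nonincr psi_cvg]] [box_Ag approx_inf]]].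
split=> // -[_ [c [c_gt0 [N BadN]]]].
have psiXm_ge0 k : (0 < k)%N -> 0 <= psi k ^+ m.
  by move=> k_gt0; rewrite exprn_ge0 ?psi_ge0.
have psiXm_nonincr a b : (0 < a)%N -> (a <= b)%N -> psi b ^+ m <= psi a ^+ m.
  move=> a_gt0 ab; apply: lerXn2r; rewrite ?nnegrE ?psi_ge0 ?psi_nonincr //.
  exact: leq_trans ab.
have psiXm_cvg0 := weighted_olivier n_gt0 psiXm_ge0 psiXm_nonincr psi_cvg.
have [K0 _ smallK0] := cvgr_lt _ psiXm_cvg0 _ c_gt0.
have [q /= approx_q] := infinite_supn_int_unbounded approx_inf (maxn N K0).
rewrite gtn_max => /andP[/ltnW Nq /ltnW K0q].
have d_ge0 := dist_intv_ge0 (affine_form R m n A g q).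
suff : c < c by rewrite ltxx.
apply: le_lt_trans (BadN q Nq) (le_lt_trans _ (smallK0 _ K0q)).
rewrite ler_wpM2l ?exprn_ge0 //; apply: lerXn2r; rewrite ?nnegrE //.
  exact: le_trans (ltW approx_q).
exact: ltW.
Qed.

Lemma notBad_approx {R : realType} {m n : nat} {Ag : 'M[R]_(m, n) * 'cV[R]_m} :
  box R m n Ag -> ~ Bad R m n Ag ->
  forall c, 0 < c -> forall N, exists q : 'cV[int]_n,
    (N <= supn_int n q)%N /\
    (supn_int n q)%:R ^+ n * dist_intv R m (affine_form R m n Ag.1 Ag.2 q) ^+ m < c.
Proof.
move=> box_Ag notBad c c_gt0 N; apply: contrapT => noq.
apply: notBad; split=> //; exists c; split=> //; exists N => q Nq.
by rewrite leNgt; apply/negP => small_q; apply: noq; exists q.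
Qed.

Lemma exists_increasing_seq {T : Type} (h : T -> nat) (P : nat -> T -> Prop) :
  (forall k N, exists t, (N <= h t)%N /\ P k t) ->
  exists ts : nat -> T, [/\ {homo h \o ts : i j / (i < j)%N},
    forall k, (k < h (ts k))%N & forall k, P k (ts k)].
Proof.
move=> hP; have [f f_spec] := choice (fun kN : nat * nat => hP kN.1 kN.2).
pose fix ts k := if k is k'.+1 then f (k, (h (ts k')).+1) else f (0, 1)%N.
have ts_incr k : (h (ts k) < h (ts k.+1))%N := (f_spec (k.+1, (h (ts k)).+1)).1.
exists ts; split; first exact: (homo_ltn ltn_trans).
  elim=> [|k IHk]; first exact: (f_spec (0, 1)%N).1.
  exact: leq_ltn_trans IHk (ts_incr k).
by case=> [|k]; [exact: (f_spec (0, 1)%N).2 | exact: (f_spec (k.+1, _)).2].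
Qed.

Lemma infinite_set_inj_nat {T : Type} {S : set T} (f : nat -> T) :
  injective f -> (forall k, S (f k)) -> ~ finite_set S.
Proof.
move=> f_inj Sf Sfin; apply: infinite_nat.
suff <- : f @^-1` S = setT by apply: finite_preimage => // ? ? _ _; exact: f_inj.
by apply/seteqP; split=> // k _; exact: Sf.
Qed.

Lemma powR_inv_natK (R : realType) (x : R) m : (0 < m)%N -> 0 <= x ->
  (x `^ m%:R^-1) ^+ m = x.
Proof.
move=> m_gt0 x_ge0; rewrite -powR_mulrn ?powR_ge0 // -powRrM mulVf ?powRr1 //.
by rewrite pnatr_eq0 -lt0n.
Qed.

Lemma sum_nat_lt_le (R : numDomainType) (F : nat -> R) T K : (forall t, 0 <= F t) ->
  \sum_(0 <= t < T | (t < K)%N) F t <= \sum_(0 <= t < K) F t.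
Proof.
move=> F_ge0; have [KT|TK] := leqP K T.
  by rewrite [leRHS](big_nat_widen _ _ _ _ _ KT).
rewrite (big_cat_nat (leq0n T) (ltnW TK)) /= -[leLHS]addr0 lerD ?sumr_ge0 //.
rewrite [leLHS]big_mkcond; apply: ler_sum_nat => t /andP[_ tT].
by rewrite (ltn_trans tT TK).
Qed.

Section step_index.
Context {Q : nat -> nat}.
Hypothesis Q_ge : forall k, (k <= Q k)%N.

(* the k such that t lies in the step (Q (k - 1), Q k] when Q is increasing *)
Definition step_index t : nat := ex_minn (ex_intro (fun k => t <= Q k)%N t (Q_ge t)).

Lemma le_Q_step_index t : (t <= Q (step_index t))%N.
Proof. by rewrite /step_index; case: ex_minnP. Qed.

Lemma step_index_min t k : (t <= Q k)%N -> (step_index t <= k)%N.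
Proof. by rewrite /step_index; case: ex_minnP => j _ j_min /j_min. Qed.

Lemma step_index_le t : (step_index t <= t)%N.
Proof. exact: step_index_min. Qed.

Lemma step_index_Q k : (step_index (Q k) <= k)%N.
Proof. exact: step_index_min. Qed.

Lemma step_index_homo : {homo step_index : s t / (s <= t)%N}.
Proof.
by move=> s t st; apply: step_index_min; exact: leq_trans st (le_Q_step_index t).
Qed.

Lemma sum_step_index_le (R : numDomainType) (a : nat -> R) p T :
  (forall k, 0 <= a k) ->
  \sum_(0 <= t < T) t.+1%:R ^+ p * a (step_index t.+1) <=
  \sum_(0 <= k < T.+1) (Q k)%:R ^+ p.+1 * a k.
Proof.
(* each term is the k = step_index t.+1 entry of the double sum over t < Q k *)
move=> a_ge0; pose F t k := if (t < Q k)%N then t.+1%:R ^+ p * a k else 0.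
have F_ge0 t k : 0 <= F t k by rewrite /F; case: ifP; rewrite ?mulr_ge0 ?exprn_ge0.
apply: (@le_trans _ _ (\sum_(0 <= t < T) \sum_(0 <= k < T.+1) F t k)).
  apply: ler_sum_nat => t /andP[_ tT].
  have jT : step_index t.+1 \in index_iota 0 T.+1.
    by rewrite mem_index_iota /= ltnS (leq_trans (step_index_le _)).
  rewrite (bigD1_seq _ jT) ?iota_uniq //= {1}/F ifT ?le_Q_step_index //.
  by rewrite lerDl sumr_ge0.
rewrite exchange_big_nat; apply: ler_sum_nat => k _ /=; rewrite /F -big_mkcond /=.
apply: le_trans (sum_nat_lt_le _ _ _ _ _) _ => [t|]; first by rewrite mulr_ge0 ?exprn_ge0.
rewrite -mulr_suml ler_wpM2r // exprSr.
have -> : (Q k)%:R ^+ p * (Q k)%:R = \sum_(0 <= t < Q k) (Q k)%:R ^+ p :> R.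
  by rewrite sumr_const_nat subn0 mulr_natr.
by apply: ler_sum_nat => t /andP[_ tQ]; apply: lerXn2r; rewrite ?nnegrE ?ler_nat.
Qed.

Lemma classC_step_root (R : realType) (a : nat -> R) m n :
  (forall k, 0 <= a k) -> {homo a : i j / (i <= j)%N >-> j <= i} ->
  (0 < m)%N -> (0 < n)%N -> cvgn (series (fun k => (Q k)%:R ^+ n * a k)) ->
  classC R m n (fun t => a (step_index t) `^ m%:R^-1).
Proof.
move=> a_ge0 a_nonincr m_gt0 n_gt0 Qa_cvg; split=> [k _|]; first exact: powR_ge0.
split=> [s t _ st|].
  by apply: ge0_ler_powR; rewrite ?nnegrE ?invr_ge0 ?a_ge0 ?a_nonincr ?step_index_homo.
under eq_fun do rewrite powR_inv_natK //.
apply: nondecreasing_is_cvgn.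
  by apply: nondecreasing_series => k _ _; rewrite mulr_ge0 ?exprn_ge0.
exists (limn (series (fun k => (Q k)%:R ^+ n * a k))) => _ [T _ <-].
apply: le_trans (nondecreasing_cvgn_le _ Qa_cvg T.+1).
  by rewrite /series /= -{2}(prednK n_gt0) sum_step_index_le.
by apply: nondecreasing_series => k _ _; rewrite mulr_ge0 ?exprn_ge0.
Qed.

End step_index.

Lemma notBad_sub_Lambda (R : realType) m n : (0 < m)%N -> (0 < n)%N ->
  box R m n `\` Bad R m n `<=` Lambda R m n.
Proof.
move=> m_gt0 n_gt0 [A g] [box_Ag notBad].
have half_gt0 k : 0 < 2^-1 ^+ k :> R by rewrite exprn_gt0 ?invr_gt0.
set d := fun q => dist_intv R m (affine_form R m n A g q).
have [qs [Q_incr Q_gt approx_qs]] := exists_increasing_seq (supn_int n)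
  (fun k q => (supn_int n q)%:R ^+ n * d q ^+ m < 2^-1 ^+ k)
  (fun k => notBad_approx box_Ag notBad _ (half_gt0 k)).
pose Q := supn_int n \o qs.
have Q_ge k : (k <= Q k)%N by exact: ltnW.
have QXn_gt0 k : 0 < (Q k)%:R ^+ n :> R.
  by rewrite exprn_gt0 // ltr0n (leq_ltn_trans _ (Q_gt k)).
pose a k : R := 2^-1 ^+ k / (Q k)%:R ^+ n.
have a_ge0 k : 0 <= a k by rewrite divr_ge0 ?ltW.
have a_nonincr : {homo a : i j / (i <= j)%N >-> j <= i}.
  move=> i j ij; apply: ler_pM;
    rewrite ?exprn_ge0 ?invr_ge0 ?ler_wiXn2l ?invf_le1 ?ler1n //.
  by rewrite lef_pV2 ?posrE // lerXn2r ?nnegrE ?ler_nat // (ltnW_homo Q_incr).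
have Qa_cvg : cvgn (series (fun k => (Q k)%:R ^+ n * a k)).
  rewrite (_ : (fun k => _) = geometric 1 2^-1); last first.
    by apply/funext => k; rewrite /a /geometric /= mul1r mulrC divfK ?gt_eqF.
  by apply: is_cvg_geometric_series; rewrite ger0_norm ?invf_lt1 ?ltr1n.
exists (fun t => a (step_index Q_ge t) `^ m%:R^-1).
split; first exact: classC_step_root.
split=> //; apply: (infinite_set_inj_nat qs) => [|k /=].
  exact: inj_compr (incn_inj (leq_mono Q_incr)).
rewrite -(ltr_pXn2r m_gt0) ?nnegrE ?dist_intv_ge0 ?powR_ge0 // powR_inv_natK //.
apply: lt_le_trans (a_nonincr _ _ (step_index_Q Q_ge k)).
by rewrite ltr_pdivlMr // mulrC; exact: approx_qs.
Qed.

Theorem theorem1p6 (R : realType) (m n : nat) :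
  (0 < m)%N -> (0 < n)%N ->
  Lambda R m n = box R m n `\` Bad R m n.
Proof.
move=> m_gt0 n_gt0; apply/seteqP; split; first exact: Lambda_sub_notBad.
exact: notBad_sub_Lambda.
Qed.
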